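(* Let $0<\alpha<1$. There exists a constant $C$ depending only on $\alpha$ such that for all $c\ge0$ and $n\ge0$ with $c^2/\chi_n(c)<\alpha$, $$\sup_{x\in[-1,1]}|\psi_{n,c}'(x)|\le C\,\chi_n(c)^{5/4},\qquad \sup_{x\in[-1,1]}(1-x^2)|\psi_{n,c}'(x)|\le C\,\sqrt{\chi_n(c)} .$$
   Context: Fix a bandwidth $c\ge 0$. The prolate spheroidal wave functions (PSWFs) $\psi_{n,c}$, $n\ge0$, are the solutions on $[-1,1]$, bounded as $|x|\to1^-$, of $\frac{d}{dx}\big[(1-x^2)\psi'(x)\big]+(\chi_n(c)-c^2x^2)\psi(x)=0$, where $0\le\chi_0(c)<\chi_1(c)<\cdots$ are the eigenvalues; $n(n+1)\le\chi_n(c)\le n(n+1)+c^2$. They are normalized by $\int_{-1}^1|\psi_{n,c}|^2dx=1$, $\psi_{n,c}$ has the parity of $n$, and $\psi_{n,c}(1)\ge0$. *)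

From Stdlib Require Import Reals Lra List.
Open Scope R_scope.

(* f is a solution on (-1,1) of the prolate ODE
     d/dx[(1-x^2) f'(x)] + (lam - c^2 x^2) f(x) = 0,
   which is regular (twice differentiable) up to and beyond x = +-1
   (PSWFs extend to entire functions; the singular solutions at +-1 are
   exactly the unbounded ones, so this is the "bounded as |x|->1" class). *)
Definition prolate_solution (c lam : R) (f : R -> R) : Prop :=
  exists d1 d2 : R -> R,
    (forall x, derivable_pt_lim f x (d1 x)) /\
    (forall x, derivable_pt_lim d1 x (d2 x)) /\
    (forall x, -1 < x < 1 ->
       (1 - x ^ 2) * d2 x - 2 * x * d1 x + (lam - c ^ 2 * x ^ 2) * f x = 0).

Definition prolate_eigenvalue (c lam : R) : Prop :=
  exists f : R -> R, prolate_solution c lam f /\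
    exists x, -1 <= x <= 1 /\ f x <> 0.

(* chi_n(c): the n-th eigenvalue (counting from 0) in increasing order,
   i.e. an eigenvalue with exactly n eigenvalues strictly below it. *)
Definition is_chi (c : R) (n : nat) (chi : R) : Prop :=
  prolate_eigenvalue c chi /\
  exists l : list R, length l = n /\ NoDup l /\
    (forall mu, In mu l <-> (prolate_eigenvalue c mu /\ mu < chi)).

Definition is_pswf (c : R) (n : nat) (chi : R) (psi : R -> R) : Prop :=
  is_chi c n chi /\
  prolate_solution c chi psi /\
  (exists pr : Riemann_integrable (fun x => psi x ^ 2) (-1) 1,
      RiemannInt pr = 1) /\
  (forall x, -1 <= x <= 1 -> psi (- x) = (-1) ^ n * psi x) /\
  0 <= psi 1.

From Stdlib Require Import Reals Lra Lia Psatz.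
From Coquelicot Require Import Coquelicot.
Open Scope R_scope.

(* Write [q = chi - c^2 x^2 >= (1 - alpha) chi], [w = (1 - x^2) psi'] and
   [s = sqrt ((1 - x^2) q)].  On [0, 1] the Sonin-type function
   [Q = psi^2 + (1 - x^2) psi'^2 / q] increases and [V = (1 - x^2) q psi^2 + w^2] decreases.
   Integrating [Q 0 <= Q x] against the normalisation gives [Q 0 = O(1)], and
   [w^2 <= V x <= V 0 = chi Q 0] is the weighted bound.  Since [w' = - q psi],
   [|psi'| <= chi |psi 1|], so it remains to show [psi(1)^2 = O(sqrt chi)].  The function
   [Phi = (G - rho psi w) (2 - rho)], with [G = V / s] and [rho = x (q + c^2 (1 - x^2)) / (q s)],
   decreases as long as [rho <= 1], that is up to distance [~ beta^-3 / chi] from [1]; there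
   [V = s G <= 2 s Phi <= 2 s Phi 0 = O(sqrt chi)].  At distance [1 / (2 chi)] from [1] we
   still have [|psi| >= |psi 1| / 2], hence [V >= beta psi(1)^2 / 8], and [V] decreases in
   between.  Negative [x] follow by reflection; [chi < 1] is impossible for a normalised
   eigenfunction of definite parity, and [chi <= 0] forces [psi' = 0]. *)

Lemma MVT_interior (g dg : R -> R) a b : a < b ->
  (forall y, a <= y <= b -> continuous g y) ->
  (forall y, a < y < b -> is_derive g y (dg y)) ->
  exists z, a < z < b /\ g b - g a = dg z * (b - a).
Proof.
  intros hab hc hd.
  pose (pr := fun y (hy : a < y < b) =>
    exist (fun l => derivable_pt_abs g y l) (dg y) (proj1 (is_derive_Reals _ _ _) (hd y hy))).
  destruct (MVT g id a b pr (fun y _ => derivable_pt_id y) hab) as [z [hz e]].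
  - intros y hy. now apply continuity_pt_filterlim, hc.
  - intros y _. apply derivable_continuous_pt, derivable_pt_id.
  - exists z. split; [exact hz|]. rewrite derive_pt_id in e. unfold id in e. simpl in e. lra.
Qed.

Lemma Rle_of_derive_nonneg (g dg : R -> R) a b : a <= b ->
  (forall y, a <= y <= b -> continuous g y) ->
  (forall y, a < y < b -> is_derive g y (dg y)) ->
  (forall y, a < y < b -> 0 <= dg y) -> g a <= g b.
Proof.
  intros hab hc hd hs. destruct (Req_dec a b) as [->|hne]; [lra|].
  destruct (MVT_interior g dg a b) as [z [hz e]]; [lra|auto|auto|].
  specialize (hs z hz). nra.
Qed.

Lemma Rle_of_derive_nonpos (g dg : R -> R) a b : a <= b ->
  (forall y, a <= y <= b -> continuous g y) ->
  (forall y, a < y < b -> is_derive g y (dg y)) ->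
  (forall y, a < y < b -> dg y <= 0) -> g b <= g a.
Proof.
  intros hab hc hd hs. destruct (Req_dec a b) as [->|hne]; [lra|].
  destruct (MVT_interior g dg a b) as [z [hz e]]; [lra|auto|auto|].
  specialize (hs z hz). nra.
Qed.

Lemma Rabs_le_of_continuous (g : R -> R) x B : continuous g x ->
  (forall e, 0 < e -> exists y, Rabs (y - x) < e /\ Rabs (g y) <= B) -> Rabs (g x) <= B.
Proof.
  intros hc happ. apply Rnot_lt_le. intro hlt.
  assert (hnear : locally x (fun y => Rabs (g y - g x) < Rabs (g x) - B)).
  { apply (hc (fun z => Rabs (z - g x) < Rabs (g x) - B)).
    exists (mkposreal _ (proj2 (Rlt_0_minus _ _) hlt)). intros z hz. exact hz. }
  destruct hnear as [e he].
  destruct (happ e (cond_pos e)) as [y [hy hgy]].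
  specialize (he y hy). pose proof (Rabs_triang_inv (g x) (g y)).
  rewrite Rabs_minus_sym in he. lra.
Qed.

Lemma ex_RInt_of_continuous (E : R -> R) a b : (forall x, continuous E x) -> ex_RInt E a b.
Proof. intro h. apply (ex_RInt_continuous (V := R_CompleteNormedModule)). intros; apply h. Qed.

Lemma RInt_eq_of_derive_interior (E h : R -> R) a b : a < b ->
  (forall x, continuous E x) -> (forall x, a <= x <= b -> continuous h x) ->
  (forall x, a < x < b -> is_derive h x (E x)) -> RInt E a b = h b - h a.
Proof.
  intros hab hE hc hh.
  assert (hI : forall t, is_derive (fun t => RInt E a t) t (E t)).
  { intro t. apply (is_derive_RInt E (fun t => RInt E a t) a t); [|apply hE].
    apply filter_forall. intro u. apply (RInt_correct (V := R_CompleteNormedModule)).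
    now apply ex_RInt_of_continuous. }
  destruct (MVT_interior (fun t => RInt E a t - h t) (fun _ => 0) a b hab) as [z [_ hz]].
  - intros t ht. apply (continuous_minus (fun t => RInt E a t) h); [|now apply hc].
    apply ex_derive_continuous. exists (E t). apply hI.
  - intros t ht. replace 0 with (E t - E t) by ring.
    exact (is_derive_minus _ h t _ _ (hI t) (hh t ht)).
  - rewrite RInt_point in hz. change (zero : R) with 0 in hz. lra.
Qed.

Lemma continuous_nonneg_RInt_nonpos (E : R -> R) a b x : (forall y, continuous E y) ->
  (forall y, a < y < b -> 0 <= E y) -> RInt E a b <= 0 -> a < x < b -> E x <= 0.
Proof.
  intros hc hpos hI hx. apply Rnot_lt_le. intro hEx.
  assert (hnear : locally x (fun y => 0 < E y)).
  { apply (hc x (fun z => 0 < z)). exists (mkposreal _ hEx). intros z hz.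
    apply Rabs_lt_between' in hz. simpl in hz. lra. }
  destruct hnear as [e he].
  set (a' := Rmax a (x - e / 2)). set (b' := Rmin b (x + e / 2)).
  assert (ha' : a <= a' < x) by (unfold a'; pose proof (cond_pos e);
    apply Rmax_case_strong; intros; lra).
  assert (hb' : x < b' <= b) by (unfold b'; pose proof (cond_pos e);
    apply Rmin_case_strong; intros; lra).
  assert (hex : forall u v, ex_RInt E u v) by (intros; now apply ex_RInt_of_continuous).
  assert (hmid : 0 < RInt E a' b').
  { apply RInt_gt_0; [lra| |intros; apply hc]. intros y hy. apply he.
    apply Rabs_lt_between'. unfold a', b' in hy. revert hy.
    apply Rmax_case_strong; apply Rmin_case_strong; intros; simpl; lra. }
  assert (0 <= RInt E a a') by (apply RInt_ge_0; [lra|apply hex|intros; apply hpos; lra]).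
  assert (0 <= RInt E b' b) by (apply RInt_ge_0; [lra|apply hex|intros; apply hpos; lra]).
  rewrite <- (RInt_Chasles E a a' b), <- (RInt_Chasles E a' b' b) in hI by auto.
  change (RInt E a a' + (RInt E a' b' + RInt E b' b) <= 0) in hI. lra.
Qed.

Lemma two_Rabs_mult_le (s a b : R) : 0 < s -> 2 * Rabs (a * b) <= s * a ^ 2 + b ^ 2 / s.
Proof.
  intro hs. rewrite Rabs_mult, <- (pow2_abs a), <- (pow2_abs b).
  assert (0 <= (s * Rabs a - Rabs b) ^ 2 / s)
    by (apply Rdiv_le_0_compat; [apply pow2_ge_0|exact hs]).
  replace (s * Rabs a ^ 2 + Rabs b ^ 2 / s)
    with ((s * Rabs a - Rabs b) ^ 2 / s + 2 * (Rabs a * Rabs b)) by (field; lra).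
  lra.
Qed.

Lemma le_div_pow k beta n : 0 <= k -> 0 < beta <= 1 -> k <= k / beta ^ n.
Proof.
  intros hk hb. assert (hbn : 0 < beta ^ n <= 1)
    by (split; [apply pow_lt; lra|rewrite <- (pow1 n); apply pow_incr; lra]).
  unfold Rdiv. replace k with (k * beta ^ n * / beta ^ n) at 1 by (field; lra).
  apply Rmult_le_compat_r; [apply Rlt_le, Rinv_0_lt_compat|]; nra.
Qed.

Lemma Rpower_5_4 x : 0 < x -> Rpower x (5 / 4) = x * sqrt (sqrt x).
Proof.
  intro h. replace (5 / 4) with (1 + / 2 * / 2) by field.
  rewrite Rpower_plus, Rpower_1, <- Rpower_mult, (Rpower_sqrt x h) by lra.
  rewrite Rpower_sqrt; [reflexivity|now apply sqrt_lt_R0].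
Qed.

Lemma Derive_eta (g : R -> R) y l : is_derive g y l -> Derive (fun x => g x) y = l.
Proof. exact (is_derive_unique g y l). Qed.

Definition prolate_ode (c chi : R) (f f1 f2 : R -> R) : Prop :=
  (forall y, is_derive f y (f1 y)) /\
  (forall y, is_derive f1 y (f2 y)) /\
  (forall y, -1 < y < 1 ->
     (1 - y ^ 2) * f2 y - 2 * y * f1 y + (chi - c ^ 2 * y ^ 2) * f y = 0).

Lemma prolate_ode_reflect c chi f f1 f2 : prolate_ode c chi f f1 f2 ->
  prolate_ode c chi (fun y => f (- y)) (fun y => - f1 (- y)) (fun y => f2 (- y)).
Proof.
  intros [h1 [h2 h3]]. split; [|split].
  - intro y. replace (- f1 (- y)) with (-1 * f1 (- y)) by ring.
    apply (is_derive_comp f Ropp); [apply h1|]. auto_derive; auto.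
  - intro y. replace (f2 (- y)) with (- (-1 * f2 (- y))) by ring.
    apply (is_derive_opp (fun y => f1 (- y))), (is_derive_comp f1 Ropp); [apply h2|].
    auto_derive; auto.
  - intros y hy. specialize (h3 (- y) ltac:(lra)). lra.
Qed.

(** * The prolate weight and the ratio [rho] *)

Section Prolate.

Variables c chi : R.

Definition q y := chi - c ^ 2 * y ^ 2.
Definition s y := sqrt ((1 - y ^ 2) * q y).
Definition N y := y * (q y + c ^ 2 * (1 - y ^ 2)).
Definition rho y := N y / (q y * s y).
Definition drho y :=
  (q y ^ 2 + c ^ 2 * (1 - y ^ 2) ^ 2 * q y + 3 * c ^ 4 * y ^ 2 * (1 - y ^ 2) ^ 2)
  / (q y * s y ^ 3).

Lemma q_derive y : is_derive q y (- 2 * c ^ 2 * y).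
Proof. unfold q. auto_derive; [auto|ring]. Qed.

Lemma q_le_chi y : q y <= chi.
Proof. unfold q. nra. Qed.

Lemma q_ge_q1 y : -1 <= y <= 1 -> q 1 <= q y.
Proof. intro hy. unfold q. assert (y ^ 2 <= 1) by nra. nra. Qed.

Lemma s_sq y : 0 <= (1 - y ^ 2) * q y -> s y * s y = (1 - y ^ 2) * q y.
Proof. exact (sqrt_sqrt _). Qed.

Lemma s_derive y : 0 < (1 - y ^ 2) * q y -> is_derive s y (- N y / s y).
Proof.
  intro h. assert (0 < s y) by now apply sqrt_lt_R0.
  assert (hpq : is_derive (fun y => (1 - y ^ 2) * q y) y (- 2 * N y))
    by (unfold N, q; auto_derive; [auto|ring]).
  replace (- N y / s y) with (- 2 * N y / (2 * s y)) by (field; lra).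
  exact (is_derive_sqrt _ y _ hpq h).
Qed.

(* The quotient rule gives [drho y] up to a multiple of [s y * s y - (1 - y ^ 2) * q y]. *)
Lemma rho_derive y : 0 < 1 - y ^ 2 -> 0 < q y -> is_derive rho y (drho y).
Proof.
  intros hp hq. assert (hpq : 0 < (1 - y ^ 2) * q y) by nra.
  assert (hs : 0 < s y) by now apply sqrt_lt_R0.
  pose proof (s_sq y (Rlt_le _ _ hpq)) as hss.
  unfold rho, drho, N. auto_derive.
  - repeat split; [eexists; apply q_derive..|eexists; now apply s_derive|nra].
  - rewrite (Derive_eta q y _ (q_derive y)), (Derive_eta s y _ (s_derive y hpq)).
    apply Rminus_diag_uniq.
    transitivity ((s y * s y - (1 - y ^ 2) * q y) *
      ((q y + c ^ 2 * (1 - y ^ 2) - 4 * c ^ 2 * y ^ 2) * q y + 2 * c ^ 2 * y * N y)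
      / (q y ^ 2 * s y ^ 3)).
    + unfold N. field. lra.
    + rewrite hss. field. lra.
Qed.

Lemma drho_nonneg y : 0 < q y -> 0 < s y -> 0 <= drho y.
Proof.
  intros hq hs. unfold drho.
  apply Rdiv_le_0_compat; [|apply Rmult_lt_0_compat; [exact hq|now apply pow_lt]].
  assert (0 <= c ^ 2 * (1 - y ^ 2) ^ 2 * q y)
    by (apply Rmult_le_pos; [apply Rmult_le_pos; apply pow2_ge_0|lra]).
  replace (3 * c ^ 4 * y ^ 2 * (1 - y ^ 2) ^ 2)
    with (3 * (c ^ 2 * y * (1 - y ^ 2)) ^ 2) by ring.
  pose proof (pow2_ge_0 (q y)). pose proof (pow2_ge_0 (c ^ 2 * y * (1 - y ^ 2))). lra.
Qed.

Lemma N_nonneg y : 0 <= y <= 1 -> 0 <= q y -> 0 <= N y.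
Proof.
  intros hy hq. unfold N.
  assert (0 <= c ^ 2 * (1 - y ^ 2)) by (apply Rmult_le_pos; [apply pow2_ge_0|nra]).
  apply Rmult_le_pos; lra.
Qed.

Lemma rho_nonneg y : 0 <= y <= 1 -> 0 < q y -> 0 < s y -> 0 <= rho y.
Proof.
  intros hy hq hs. apply Rdiv_le_0_compat; [apply N_nonneg; lra|].
  now apply Rmult_lt_0_compat.
Qed.

Lemma rho_zero : rho 0 = 0.
Proof. unfold rho, N, Rdiv. ring. Qed.

(* [N <= 2 chi] while [(q s) ^ 2 = (1 - y ^ 2) q ^ 3 >= (1 - y) (beta chi) ^ 3 >= 4 chi ^ 2]. *)
Lemma rho_le_one beta y : 0 < beta -> 0 <= y < 1 -> beta * chi <= q 1 ->
  4 / beta ^ 3 <= (1 - y) * chi -> rho y <= 1.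
Proof.
  intros hb hy hq1 hA.
  assert (hb3 : 0 < beta ^ 3) by now apply pow_lt.
  assert (hchi : 0 < chi).
  { apply Rnot_le_lt. intro. assert (0 < 4 / beta ^ 3) by (apply Rdiv_lt_0_compat; lra).
    assert ((1 - y) * chi <= 0) by (apply Rmult_le_0_l; lra). lra. }
  assert (hbc : 0 < beta * chi) by now apply Rmult_lt_0_compat.
  assert (hc2 : c ^ 2 <= chi) by (unfold q in hq1; lra).
  assert (hqy : beta * chi <= q y) by (pose proof (q_ge_q1 y); lra).
  pose proof (q_le_chi y) as hqchi.
  assert (hcp : 0 <= c ^ 2 * (1 - y ^ 2) <= c ^ 2)
    by (split; [apply Rmult_le_pos; [apply pow2_ge_0|nra]|nra]).
  assert (hpq : 0 < (1 - y ^ 2) * q y) by (apply Rmult_lt_0_compat; nra).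
  assert (hs : 0 < s y) by now apply sqrt_lt_R0.
  assert (hN : 0 <= N y <= 2 * chi).
  { unfold N. split; [apply Rmult_le_pos; lra|].
    apply Rle_trans with (1 * (q y + c ^ 2 * (1 - y ^ 2))); [|lra].
    apply Rmult_le_compat_r; lra. }
  assert (hcube : 4 * chi ^ 2 <= (1 - y ^ 2) * q y ^ 3).
  { replace (4 * chi ^ 2) with (beta ^ 3 * chi ^ 2 * (4 / beta ^ 3)) by (field; lra).
    apply Rle_trans with ((beta * chi) ^ 3 * (1 - y)).
    { replace ((beta * chi) ^ 3 * (1 - y)) with (beta ^ 3 * chi ^ 2 * ((1 - y) * chi))
        by ring.
      apply Rmult_le_compat_l; [|exact hA]. apply Rmult_le_pos; [lra|apply pow2_ge_0]. }
    rewrite (Rmult_comm (1 - y ^ 2)).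
    apply Rmult_le_compat; [apply pow_le; nra|lra|apply pow_incr; nra|nra]. }
  assert (hqs : N y <= q y * s y).
  { assert (hsq : (q y * s y) ^ 2 = (1 - y ^ 2) * q y ^ 3).
    { replace ((q y * s y) ^ 2) with (q y ^ 2 * (s y * s y)) by ring.
      rewrite (s_sq y (Rlt_le _ _ hpq)). ring. }
    assert (hN2 : N y ^ 2 <= (q y * s y) ^ 2) by (rewrite hsq; nra).
    apply Rsqr_incr_0_var; [unfold Rsqr; nra|apply Rmult_le_pos; lra]. }
  unfold rho. apply (Rdiv_le_1 _ _ (Rmult_lt_0_compat (q y) (s y) ltac:(lra) hs)). exact hqs.
Qed.

(** * Sonin-type functions of a solution *)

Variables f f1 f2 : R -> R.
Hypothesis hsol : prolate_ode c chi f f1 f2.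

Lemma f_derive y : is_derive f y (f1 y).
Proof. apply hsol. Qed.

Lemma f1_derive y : is_derive f1 y (f2 y).
Proof. apply hsol. Qed.

Lemma f2_eq y : -1 < y < 1 -> (1 - y ^ 2) * f2 y = 2 * y * f1 y - q y * f y.
Proof. intro hy. pose proof (proj2 (proj2 hsol) y hy). unfold q. lra. Qed.

Lemma ex_derive_f y : ex_derive f y.
Proof. eexists. apply f_derive. Qed.

Lemma ex_derive_f1 y : ex_derive f1 y.
Proof. eexists. apply f1_derive. Qed.

Lemma ex_derive_q y : ex_derive q y.
Proof. eexists. apply q_derive. Qed.

Local Ltac continuous_by_derive :=
  apply (ex_derive_continuous (K := R_AbsRing) (V := R_NormedModule));
  auto_derive;
  repeat split; first [apply ex_derive_f | apply ex_derive_f1 | apply ex_derive_q | lra].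

Definition w y := (1 - y ^ 2) * f1 y.
Definition Q y := f y ^ 2 + (1 - y ^ 2) * f1 y ^ 2 / q y.
Definition V y := (1 - y ^ 2) * q y * f y ^ 2 + w y ^ 2.
Definition G y := s y * f y ^ 2 + w y ^ 2 / s y.
Definition Phi y := (G y - rho y * (f y * w y)) * (2 - rho y).

Lemma w_derive y : -1 < y < 1 -> is_derive w y (- q y * f y).
Proof.
  intro hy. unfold w. auto_derive; [apply ex_derive_f1|].
  rewrite (Derive_eta f1 y _ (f1_derive y)). pose proof (f2_eq y hy). lra.
Qed.

Lemma fw_derive y : -1 < y < 1 ->
  is_derive (fun y => f y * w y) y (f1 y * w y - q y * f y ^ 2).
Proof.
  intro hy. auto_derive; [split; [apply ex_derive_f|split; [eexists; now apply w_derive|auto]]|].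
  rewrite (Derive_eta f y _ (f_derive y)), (Derive_eta w y _ (w_derive y hy)). ring.
Qed.

Lemma Q_derive y : -1 < y < 1 -> q y <> 0 -> is_derive Q y (2 * N y * f1 y ^ 2 / q y ^ 2).
Proof.
  intros hy hq. unfold Q, N.
  auto_derive; [repeat split; auto using ex_derive_f, ex_derive_f1, ex_derive_q|].
  rewrite (Derive_eta f y _ (f_derive y)), (Derive_eta f1 y _ (f1_derive y)),
    (Derive_eta q y _ (q_derive y)).
  assert (hf2 : f2 y = (2 * y * f1 y - q y * f y) / (1 - y ^ 2))
    by (rewrite <- f2_eq by exact hy; field; nra).
  rewrite hf2. field. split; [exact hq|nra].
Qed.

Lemma V_derive y : -1 < y < 1 -> is_derive V y (- 2 * N y * f y ^ 2).
Proof.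
  intro hy. unfold V, N.
  auto_derive; [repeat split; auto using ex_derive_f, ex_derive_q; eexists; now apply w_derive|].
  rewrite (Derive_eta f y _ (f_derive y)), (Derive_eta q y _ (q_derive y)),
    (Derive_eta w y _ (w_derive y hy)).
  unfold w. ring.
Qed.

Lemma G_derive y : -1 < y < 1 -> 0 < q y ->
  is_derive G y (rho y * (f1 y * w y - q y * f y ^ 2)).
Proof.
  intros hy hq. assert (hpq : 0 < (1 - y ^ 2) * q y) by (apply Rmult_lt_0_compat; nra).
  assert (hs : 0 < s y) by now apply sqrt_lt_R0.
  assert (hsw : s y * s y * f1 y = q y * w y)
    by (rewrite s_sq by lra; unfold w; ring).
  unfold G, rho.
  auto_derive.
  { repeat split; [eexists; now apply s_derive|apply ex_derive_f|
      eexists; now apply w_derive|eexists; now apply s_derive|lra]. }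
  rewrite (Derive_eta f y _ (f_derive y)), (Derive_eta s y _ (s_derive y hpq)),
    (Derive_eta w y _ (w_derive y hy)).
  apply Rminus_diag_uniq.
  transitivity ((s y * s y * f1 y - q y * w y) *
    (2 * f y / s y - N y * w y / (q y * s y ^ 3))); [field; lra|].
  rewrite hsw. ring.
Qed.

Lemma Phi_derive y : -1 < y < 1 -> 0 < q y ->
  is_derive Phi y (- drho y * (G y + 2 * (f y * w y) * (1 - rho y))).
Proof.
  intros hy hq. assert (hp : 0 < 1 - y ^ 2) by nra.
  unfold Phi. auto_derive.
  { repeat split; [eexists; now apply G_derive|eexists; now apply rho_derive|
      apply ex_derive_f|eexists; now apply w_derive|eexists; now apply rho_derive]. }
  rewrite (Derive_eta G y _ (G_derive y hy hq)), (Derive_eta rho y _ (rho_derive y hp hq)),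
    (Derive_eta f y _ (f_derive y)), (Derive_eta w y _ (w_derive y hy)).
  ring.
Qed.

Lemma energy_identity :
  RInt (fun x => (1 - x ^ 2) * f1 x ^ 2) (-1) 1 = RInt (fun x => q x * f x ^ 2) (-1) 1.
Proof.
  assert (hI : RInt (fun x => (1 - x ^ 2) * f1 x ^ 2 - q x * f x ^ 2) (-1) 1
    = f 1 * w 1 - f (-1) * w (-1)).
  { apply (RInt_eq_of_derive_interior _ (fun y => f y * w y)); [lra| | |].
    - intro x. continuous_by_derive.
    - intros x _. unfold w. continuous_by_derive.
    - intros x hx. replace ((1 - x ^ 2) * f1 x ^ 2 - q x * f x ^ 2)
        with (f1 x * w x - q x * f x ^ 2) by (unfold w; ring).
      now apply fw_derive. }
  rewrite (RInt_minus (V := R_CompleteNormedModule)) in hI;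
    [|apply ex_RInt_of_continuous; intro x; continuous_by_derive..].
  change (minus ?a ?b) with (a - b) in hI. unfold w in hI. lra.
Qed.

Lemma weighted_energy_le : RInt (fun x => f x ^ 2) (-1) 1 = 1 ->
  RInt (fun x => (1 - x ^ 2) * f1 x ^ 2) (-1) 1 <= chi.
Proof.
  intro hnorm. rewrite energy_identity.
  apply Rle_trans with (RInt (fun x => chi * f x ^ 2) (-1) 1).
  - apply RInt_le; [lra|apply ex_RInt_of_continuous; intro x; continuous_by_derive..|].
    intros x _. apply Rmult_le_compat_r; [apply pow2_ge_0|apply q_le_chi].
  - rewrite (RInt_scal (V := R_CompleteNormedModule) (fun x => f x ^ 2)), hnorm;
      [|apply ex_RInt_of_continuous; intro x; continuous_by_derive].
    change (chi * 1 <= chi). lra.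
Qed.

Lemma f1_vanishes : RInt (fun x => f x ^ 2) (-1) 1 = 1 -> chi <= 0 ->
  forall x, -1 <= x <= 1 -> f1 x = 0.
Proof.
  intros hnorm hchi.
  assert (hint : forall y, -1 < y < 1 -> f1 y = 0).
  { intros y hy.
    assert (hle : (1 - y ^ 2) * f1 y ^ 2 <= 0).
    { apply (continuous_nonneg_RInt_nonpos (fun x => (1 - x ^ 2) * f1 x ^ 2) (-1) 1);
        [intro x; continuous_by_derive| |pose proof (weighted_energy_le hnorm); lra|exact hy].
      intros x hx. apply Rmult_le_pos; [nra|apply pow2_ge_0]. }
    assert (hp : 0 < 1 - y ^ 2) by nra.
    assert (f1 y ^ 2 <= 0) by (apply (Rmult_le_reg_l (1 - y ^ 2)); lra).
    assert (f1 y ^ 2 = 0) by (pose proof (pow2_ge_0 (f1 y)); lra).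
    destruct (Req_dec (f1 y) 0) as [|hne]; [assumption|now apply (pow_nonzero _ 2) in hne]. }
  intros x hx. apply Rabs_eq_0, Rle_antisym; [|apply Rabs_pos].
  apply Rabs_le_of_continuous; [continuous_by_derive|].
  intros e he. set (t := / (1 + e)).
  assert (ht0 : 0 < t) by (apply Rinv_0_lt_compat; lra).
  assert (ht1 : t * (1 + e) = 1) by (unfold t; field; lra).
  exists (x * t). split.
  - apply Rabs_def1; nra.
  - rewrite hint by nra. rewrite Rabs_R0. lra.
Qed.

Hypothesis hq1 : 0 < q 1.

Lemma q_pos y : -1 <= y <= 1 -> 0 < q y.
Proof. intro hy. pose proof (q_ge_q1 y hy). lra. Qed.

Lemma chi_pos : 0 < chi.
Proof. pose proof (q_pos 0 ltac:(lra)). unfold q in *. lra. Qed.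

Lemma s_pos y : -1 < y < 1 -> 0 < s y.
Proof.
  intro hy. apply sqrt_lt_R0, Rmult_lt_0_compat; [nra|apply q_pos; lra].
Qed.

Lemma Q_continuous y : -1 <= y <= 1 -> continuous Q y.
Proof. intro hy. pose proof (q_pos y hy). unfold Q. continuous_by_derive. Qed.

Lemma Q_le a b : 0 <= a <= b -> b <= 1 -> Q a <= Q b.
Proof.
  intros hab hb.
  apply (Rle_of_derive_nonneg Q (fun y => 2 * N y * f1 y ^ 2 / q y ^ 2)); [lra| | |].
  - intros y hy. apply Q_continuous. lra.
  - intros y hy. apply Q_derive; [lra|]. apply Rgt_not_eq, q_pos. lra.
  - intros y hy. pose proof (q_pos y ltac:(lra)).
    apply Rdiv_le_0_compat; [|now apply pow_lt].
    pose proof (N_nonneg y ltac:(lra) ltac:(lra)). pose proof (pow2_ge_0 (f1 y)).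
    apply Rmult_le_pos; [apply Rmult_le_pos|]; lra.
Qed.

Lemma Q0_le_Q x : -1 <= x <= 1 -> Q 0 <= Q x.
Proof.
  intro hx. destruct (Rle_lt_dec 0 x) as [hx0|hx0]; [apply Q_le; lra|].
  apply (Rle_of_derive_nonpos Q (fun y => 2 * N y * f1 y ^ 2 / q y ^ 2)); [lra| | |].
  - intros y hy. apply Q_continuous. lra.
  - intros y hy. apply Q_derive; [lra|]. apply Rgt_not_eq, q_pos. lra.
  - intros y hy. pose proof (q_pos y ltac:(lra)).
    assert (hN : 0 <= N (- y)) by (apply N_nonneg; [lra|apply Rlt_le, q_pos; lra]).
    replace (N (- y)) with (- N y) in hN by (unfold N, q; ring).
    assert (0 <= - (2 * N y * f1 y ^ 2 / q y ^ 2)); [|lra].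
    replace (- (2 * N y * f1 y ^ 2 / q y ^ 2)) with (2 * - N y * f1 y ^ 2 / q y ^ 2)
      by (field; lra).
    apply Rdiv_le_0_compat; [|now apply pow_lt].
    apply Rmult_le_pos; [lra|apply pow2_ge_0].
Qed.

Lemma V_le a b : 0 <= a <= b -> b <= 1 -> V b <= V a.
Proof.
  intros hab hb.
  apply (Rle_of_derive_nonpos V (fun y => - 2 * N y * f y ^ 2)); [lra| | |].
  - intros y _. unfold V, w. continuous_by_derive.
  - intros y hy. apply V_derive. lra.
  - intros y hy. pose proof (q_pos y ltac:(lra)).
    pose proof (N_nonneg y ltac:(lra) ltac:(lra)). pose proof (pow2_ge_0 (f y)).
    assert (0 <= N y * f y ^ 2) by now apply Rmult_le_pos. lra.
Qed.

Lemma sq_f_le_Q y : -1 <= y <= 1 -> f y ^ 2 <= Q y.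
Proof.
  intro hy. pose proof (q_pos y hy). unfold Q.
  assert (0 <= (1 - y ^ 2) * f1 y ^ 2 / q y); [|lra].
  apply Rdiv_le_0_compat; [apply Rmult_le_pos; [nra|apply pow2_ge_0]|lra].
Qed.

Lemma Q_one : Q 1 = f 1 ^ 2.
Proof. unfold Q, Rdiv. ring. Qed.

Lemma V_zero : V 0 = chi * Q 0.
Proof.
  pose proof (q_pos 0 ltac:(lra)). unfold V, Q, w in *. unfold q in *. field. lra.
Qed.

Lemma Q0_nonneg : 0 <= Q 0.
Proof. pose proof (sq_f_le_Q 0 ltac:(lra)). pose proof (pow2_ge_0 (f 0)). lra. Qed.

Lemma Q0_le_of_norm beta : RInt (fun x => f x ^ 2) (-1) 1 = 1 -> 0 < beta ->
  beta * chi <= q 1 -> Q 0 <= (1 + / beta) / 2.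
Proof.
  intros hnorm hb hq. pose proof chi_pos.
  assert (hbc : 0 < beta * chi) by now apply Rmult_lt_0_compat.
  assert (h : RInt (fun _ => Q 0) (-1) 1 <=
    RInt (fun x => f x ^ 2 + / (beta * chi) * ((1 - x ^ 2) * f1 x ^ 2)) (-1) 1).
  { apply RInt_le; [lra|apply ex_RInt_of_continuous; intro x; continuous_by_derive..|].
    intros x hx. apply Rle_trans with (Q x); [apply Q0_le_Q; lra|]. unfold Q.
    apply Rplus_le_compat_l. unfold Rdiv. rewrite Rmult_comm.
    apply Rmult_le_compat_r; [apply Rmult_le_pos; [nra|apply pow2_ge_0]|].
    apply Rinv_le_contravar; [lra|]. pose proof (q_ge_q1 x ltac:(lra)). lra. }
  rewrite RInt_const, (RInt_plus (V := R_CompleteNormedModule)),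
    (RInt_scal (V := R_CompleteNormedModule)), hnorm in h;
    [|apply ex_RInt_of_continuous; intro x; continuous_by_derive..].
  change ((1 - -1) * Q 0 <= 1 + / (beta * chi) * RInt (fun x => (1 - x ^ 2) * f1 x ^ 2) (-1) 1)
    in h.
  assert (/ (beta * chi) * RInt (fun x => (1 - x ^ 2) * f1 x ^ 2) (-1) 1 <= / beta).
  { replace (/ beta) with (/ (beta * chi) * chi) by (field; lra).
    apply Rmult_le_compat_l; [apply Rlt_le, Rinv_0_lt_compat; lra|].
    now apply weighted_energy_le. }
  lra.
Qed.

Lemma Rabs_f_le_f_one x : 0 <= x <= 1 -> Rabs (f x) <= Rabs (f 1).
Proof.
  intro hx. apply Rsqr_le_abs_0. unfold Rsqr.
  pose proof (sq_f_le_Q x ltac:(lra)). pose proof (Q_le x 1 hx ltac:(lra)).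
  rewrite Q_one in *. lra.
Qed.

Lemma Rabs_f1_le_chi x : 0 <= x <= 1 -> Rabs (f1 x) <= chi * Rabs (f 1).
Proof.
  intro hx.
  assert (hlt : forall x, 0 <= x < 1 -> Rabs (f1 x) <= chi * Rabs (f 1)).
  { clear x hx. intros x hx.
    destruct (MVT_interior w (fun y => - q y * f y) x 1) as [z [hz e]]; [lra| | |].
    - intros y _. unfold w. continuous_by_derive.
    - intros y hy. apply w_derive. lra.
    - assert (hwx : w x = q z * f z * (1 - x)) by (unfold w in *; lra).
      assert (hqz : 0 <= q z <= chi)
        by (pose proof (q_pos z ltac:(lra)); pose proof (q_le_chi z); lra).
      assert (hfz : Rabs (f z) <= Rabs (f 1)) by (apply Rabs_f_le_f_one; lra).
      assert (hw : (1 + x) * Rabs (f1 x) * (1 - x) <= chi * Rabs (f 1) * (1 - x)).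
      { replace ((1 + x) * Rabs (f1 x) * (1 - x)) with (Rabs (w x))
          by (unfold w; rewrite Rabs_mult, (Rabs_pos_eq (1 - x ^ 2)) by nra; ring).
        rewrite hwx, !Rabs_mult, (Rabs_pos_eq (q z)), (Rabs_pos_eq (1 - x)) by lra.
        apply Rmult_le_compat_r; [lra|].
        apply Rmult_le_compat; [lra|apply Rabs_pos|lra|exact hfz]. }
      apply Rmult_le_reg_r in hw; [|lra]. pose proof (Rabs_pos (f1 x)). nra. }
  destruct (Req_dec x 1) as [->|]; [|apply hlt; lra].
  apply Rabs_le_of_continuous.
  - continuous_by_derive.
  - intros e he. exists (Rmax 0 (1 - e / 2)).
    assert (hy : 0 <= Rmax 0 (1 - e / 2) < 1 /\ Rabs (Rmax 0 (1 - e / 2) - 1) < e)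
      by (apply Rmax_case_strong; intros; rewrite Rabs_left; lra).
    split; [apply hy|apply hlt, hy].
Qed.

Lemma Rabs_f_sub_f_one_le x : 0 <= x <= 1 -> Rabs (f x - f 1) <= chi * Rabs (f 1) * (1 - x).
Proof.
  intro hx. destruct (Req_dec x 1) as [->|hne].
  { rewrite Rminus_diag, Rabs_R0. lra. }
  destruct (MVT_interior f f1 x 1) as [z [hz e]]; [lra| |intros; apply f_derive|].
  - intros y _. continuous_by_derive.
  - rewrite Rabs_minus_sym, e, Rabs_mult, (Rabs_pos_eq (1 - x)) by lra.
    apply Rmult_le_compat_r; [lra|]. apply Rabs_f1_le_chi. lra.
Qed.

Lemma weighted_f1_le x : 0 <= x <= 1 -> (1 - x ^ 2) * Rabs (f1 x) <= sqrt (chi * Q 0).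
Proof.
  intro hx. rewrite <- V_zero.
  assert (hp : 0 <= 1 - x ^ 2) by nra.
  rewrite <- (sqrt_pow2 ((1 - x ^ 2) * Rabs (f1 x))) by (apply Rmult_le_pos; [lra|apply Rabs_pos]).
  apply sqrt_le_1_alt. apply Rle_trans with (V x); [|apply V_le; lra].
  unfold V, w. rewrite Rpow_mult_distr, pow2_abs.
  assert (0 <= (1 - x ^ 2) * q x * f x ^ 2).
  { pose proof (q_pos x ltac:(lra)). apply Rmult_le_pos; [nra|apply pow2_ge_0]. }
  lra.
Qed.

(* For [chi < 1], [f] keeps the sign of [f 1] on [[0, 1]]: impossible for odd [n], and for
   even [n] it contradicts [w (-1) = w 1 = 0]. *)
Lemma chi_ge_one n : RInt (fun x => f x ^ 2) (-1) 1 = 1 ->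
  (forall x, -1 <= x <= 1 -> f (- x) = (-1) ^ n * f x) -> 0 <= f 1 -> 1 <= chi.
Proof.
  intros hnorm hpar hf1. apply Rnot_lt_le. intro hlt. pose proof chi_pos.
  assert (hsym : forall x, 0 <= x <= 1 -> Rabs (f (- x)) = Rabs (f x))
    by (intros x hx; rewrite hpar, Rabs_mult, pow_1_abs by lra; ring).
  destruct (Req_dec (f 1) 0) as [h0|hne].
  - assert (hz : forall x, -1 <= x <= 1 -> Rabs (f x) <= 0).
    { intros x hx. rewrite <- Rabs_R0, <- h0. destruct (Rle_lt_dec 0 x).
      - apply Rabs_f_le_f_one. lra.
      - rewrite <- (Ropp_involutive x), hsym by lra. apply Rabs_f_le_f_one. lra. }
    rewrite (RInt_ext _ (fun _ => 0)), RInt_const in hnorm.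
    + change ((1 - -1) * 0 = 1) in hnorm. lra.
    + intros x hx. rewrite Rmin_left, Rmax_right in hx by lra.
      specialize (hz x ltac:(lra)). pose proof (Rabs_pos (f x)).
      change (f x ^ 2 = 0). rewrite (Rabs_eq_0 (f x)) by lra. ring.
  - assert (hpos : forall y, 0 <= y <= 1 -> 0 < f y).
    { intros y hy. pose proof (Rabs_f_sub_f_one_le y hy) as h.
      rewrite (Rabs_pos_eq (f 1)) in h by lra.
      assert (chi * f 1 * (1 - y) < f 1).
      { apply Rle_lt_trans with (chi * f 1); [|nra].
        rewrite <- (Rmult_1_r (chi * f 1)) at 2. apply Rmult_le_compat_l; nra. }
      pose proof (Rle_abs (- (f y - f 1))). rewrite Rabs_Ropp in *. lra. }
    destruct (Nat.Even_or_Odd n) as [[k ->]|[k ->]].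
    + destruct (MVT_interior w (fun y => - q y * f y) (-1) 1) as [z [hz e]]; [lra| | |].
      * intros y _. unfold w. continuous_by_derive.
      * intros y hy. now apply w_derive.
      * assert (0 < f z).
        { destruct (Rle_lt_dec 0 z); [apply hpos; lra|].
          rewrite <- (Ropp_involutive z), hpar, pow_1_even by lra. rewrite Rmult_1_l.
          apply hpos. lra. }
        pose proof (q_pos z ltac:(lra)). unfold w in e.
        assert (0 < q z * f z) by now apply Rmult_lt_0_compat. lra.
    + specialize (hpar 0 ltac:(lra)). rewrite Ropp_0 in hpar.
      replace (2 * k + 1)%nat with (S (2 * k)) in hpar by lia.
      rewrite pow_1_odd in hpar. specialize (hpos 0 ltac:(lra)). lra.
Qed.

(** * The endpoint value [f 1] *)

Lemma V_eq_s_G y : -1 < y < 1 -> V y = s y * G y.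
Proof.
  intro hy. pose proof (s_pos y hy).
  assert (hss : s y * s y = (1 - y ^ 2) * q y)
    by (apply s_sq, Rmult_le_pos; [nra|apply Rlt_le, q_pos; lra]).
  unfold V, G. rewrite <- hss. field. lra.
Qed.

Lemma Phi_zero : Phi 0 = 2 * sqrt chi * Q 0.
Proof.
  pose proof chi_pos. assert (hs : 0 < sqrt chi) by now apply sqrt_lt_R0.
  unfold Phi, G, Q, w. rewrite rho_zero.
  replace (s 0) with (sqrt chi) by (unfold s, q; f_equal; ring).
  replace (q 0) with (sqrt chi * sqrt chi) by (rewrite sqrt_sqrt; unfold q; lra).
  field. lra.
Qed.

Lemma G_le_two_Phi y : 0 <= y < 1 -> rho y <= 1 -> G y <= 2 * Phi y.
Proof.
  intros hy hr. pose proof (s_pos y ltac:(lra)) as hs.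
  pose proof (rho_nonneg y ltac:(lra) (q_pos y ltac:(lra)) hs).
  pose proof (two_Rabs_mult_le _ (f y) (w y) hs) as hG. fold (G y) in hG.
  pose proof (Rle_abs (f y * w y)). pose proof (Rabs_pos (f y * w y)).
  assert (hra : rho y * (f y * w y) <= Rabs (f y * w y)).
  { apply Rle_trans with (rho y * Rabs (f y * w y)); [now apply Rmult_le_compat_l|nra]. }
  unfold Phi. apply Rle_trans with (2 * ((G y - rho y * (f y * w y)) * 1)); [lra|].
  apply Rmult_le_compat_l; [lra|]. apply Rmult_le_compat_l; lra.
Qed.

Lemma Phi_le x1 : 0 <= x1 < 1 -> (forall y, 0 <= y <= x1 -> rho y <= 1) -> Phi x1 <= Phi 0.
Proof.
  intros hx1 hrho.
  apply (Rle_of_derive_nonpos Phi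
    (fun y => - drho y * (G y + 2 * (f y * w y) * (1 - rho y)))); [lra| | |].
  - intros y hy. apply (ex_derive_continuous (K := R_AbsRing) (V := R_NormedModule)).
    eexists. apply Phi_derive; [lra|apply q_pos; lra].
  - intros y hy. apply Phi_derive; [lra|apply q_pos; lra].
  - intros y hy. pose proof (q_pos y ltac:(lra)). pose proof (s_pos y ltac:(lra)) as hs.
    pose proof (drho_nonneg y ltac:(lra) hs). specialize (hrho y ltac:(lra)).
    pose proof (rho_nonneg y ltac:(lra) ltac:(lra) hs).
    pose proof (two_Rabs_mult_le _ (f y) (w y) hs) as hG. fold (G y) in hG.
    pose proof (Rle_abs (- (f y * w y))). rewrite Rabs_Ropp in *.
    assert (- Rabs (f y * w y) * (1 - rho y) <= f y * w y * (1 - rho y))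
      by (apply Rmult_le_compat_r; lra).
    assert (Rabs (f y * w y) * (1 - rho y) <= Rabs (f y * w y) * 1)
      by (apply Rmult_le_compat_l; [apply Rabs_pos|lra]).
    assert (0 <= G y + 2 * (f y * w y) * (1 - rho y)) by lra.
    assert (0 <= drho y * (G y + 2 * (f y * w y) * (1 - rho y))) by now apply Rmult_le_pos.
    lra.
Qed.

Lemma V_boundary_layer_ge beta : 0 < beta -> 1 <= chi -> beta * chi <= q 1 ->
  beta * f 1 ^ 2 / 8 <= V (1 - / (2 * chi)).
Proof.
  intros hb hchi hq. assert (hbc : 0 < beta * chi) by (apply Rmult_lt_0_compat; lra).
  set (x2 := 1 - / (2 * chi)).
  assert (hd : 0 < / (2 * chi) <= / 2)
    by (split; [apply Rinv_0_lt_compat|apply Rinv_le_contravar]; lra).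
  assert (hx2 : 1 / 2 <= x2 < 1) by (unfold x2; lra).
  assert (hf : Rabs (f 1) / 2 <= Rabs (f x2)).
  { pose proof (Rabs_f_sub_f_one_le x2 ltac:(lra)) as h.
    replace (chi * Rabs (f 1) * (1 - x2)) with (Rabs (f 1) / 2) in h
      by (unfold x2; field; lra).
    pose proof (Rabs_triang_inv (f 1) (f x2)). rewrite Rabs_minus_sym in h. lra. }
  assert (hp : / (2 * chi) <= 1 - x2 ^ 2) by (unfold x2 in *; nra).
  assert (hqx : beta * chi <= q x2) by (pose proof (q_ge_q1 x2 ltac:(lra)); lra).
  assert (hsq : (Rabs (f 1) / 2) ^ 2 <= f x2 ^ 2)
    by (rewrite <- (pow2_abs (f x2)); apply pow_incr; split; [|exact hf];
        apply Rmult_le_pos; [apply Rabs_pos|lra]).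
  rewrite <- (pow2_abs (f 1)) in *.
  apply Rle_trans with ((1 - x2 ^ 2) * q x2 * f x2 ^ 2);
    [|unfold V; pose proof (pow2_ge_0 (w x2)); lra].
  replace (beta * Rabs (f 1) ^ 2 / 8) with (/ (2 * chi) * (beta * chi) * (Rabs (f 1) / 2) ^ 2)
    by (field; lra).
  pose proof (pow2_ge_0 (Rabs (f 1) / 2)).
  apply Rmult_le_compat; [apply Rmult_le_pos|lra|apply Rmult_le_compat|exact hsq]; lra.
Qed.

Lemma V_le_sqrt_chi beta : 0 < beta <= 1 -> beta * chi <= q 1 -> 4 / beta ^ 3 < chi ->
  V (1 - 4 / beta ^ 3 / chi) <= 8 * (4 / beta ^ 3) * sqrt chi * Q 0.
Proof.
  intros hb hq hA. set (A := 4 / beta ^ 3) in *. set (x1 := 1 - A / chi).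
  assert (hA4 : 4 <= A) by (apply le_div_pow; lra).
  assert (hd : 0 < A / chi < 1).
  { split; [apply Rdiv_lt_0_compat; lra|].
    apply (Rmult_lt_reg_r chi); [lra|]. unfold Rdiv. rewrite Rmult_assoc, Rinv_l; lra. }
  assert (hx1 : 0 < x1 < 1) by (unfold x1; lra).
  assert (hrho : forall y, 0 <= y <= x1 -> rho y <= 1).
  { intros y hy. apply (rho_le_one beta y); [lra|lra|exact hq|]. change (A <= (1 - y) * chi).
    replace A with (A / chi * chi) by (field; lra).
    apply Rmult_le_compat_r; unfold x1 in hy; lra. }
  assert (hs : s x1 <= 2 * A).
  { rewrite <- (sqrt_pow2 (2 * A)) by lra. apply sqrt_le_1_alt.
    pose proof (q_pos x1 ltac:(lra)). pose proof (q_le_chi x1).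
    apply Rle_trans with (2 * (1 - x1) * chi).
    - apply Rmult_le_compat; nra.
    - replace (2 * (1 - x1) * chi) with (2 * A) by (unfold x1; field; lra). nra. }
  pose proof (s_pos x1 ltac:(lra)). pose proof (sqrt_pos chi).
  assert (hQ : 0 <= sqrt chi * Q 0) by (apply Rmult_le_pos; [lra|apply Q0_nonneg]).
  pose proof (G_le_two_Phi x1 ltac:(lra) (hrho x1 ltac:(lra))).
  pose proof (Phi_le x1 ltac:(lra) hrho). rewrite Phi_zero in *.
  rewrite V_eq_s_G by lra.
  apply Rle_trans with (s x1 * (4 * sqrt chi * Q 0)); [apply Rmult_le_compat_l; lra|].
  replace (8 * A * sqrt chi * Q 0) with (2 * A * (4 * sqrt chi * Q 0)) by ring.
  apply Rmult_le_compat_r; [lra|exact hs].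
Qed.

Lemma f_one_sq_le beta : 0 < beta <= 1 -> 1 <= chi -> beta * chi <= q 1 ->
  f 1 ^ 2 <= 256 / beta ^ 4 * Q 0 * sqrt chi.
Proof.
  intros hb hchi hq. set (A := 4 / beta ^ 3).
  assert (hA4 : 4 <= A) by (apply le_div_pow; lra).
  assert (hx2 : 0 < / (2 * chi) <= / 2)
    by (split; [apply Rinv_0_lt_compat|apply Rinv_le_contravar]; lra).
  pose proof Q0_nonneg. pose proof (sqrt_pos chi).
  assert (hsq : 1 <= sqrt chi) by (rewrite <- sqrt_1; apply sqrt_le_1_alt; lra).
  assert (hV : V (1 - / (2 * chi)) <= 8 * A * sqrt chi * Q 0).
  { destruct (Rle_lt_dec chi A) as [hsmall|hlarge].
    - apply Rle_trans with (V 0); [apply V_le; lra|]. rewrite V_zero.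
      rewrite <- (sqrt_sqrt chi) at 1 by lra.
      assert (sqrt chi <= A) by (pose proof (sqrt_sqrt chi ltac:(lra)); nra).
      assert (0 <= sqrt chi * Q 0) by now apply Rmult_le_pos. nra.
    - apply Rle_trans with (V (1 - A / chi)); [|now apply V_le_sqrt_chi].
      assert (/ (2 * chi) <= A / chi).
      { replace (/ (2 * chi)) with (/ 2 * / chi) by (field; lra). unfold Rdiv.
        apply Rmult_le_compat_r; [apply Rlt_le, Rinv_0_lt_compat|]; lra. }
      assert (0 < A / chi < 1).
      { split; [apply Rdiv_lt_0_compat; lra|].
        apply (Rmult_lt_reg_r chi); [lra|]. unfold Rdiv. rewrite Rmult_assoc, Rinv_l; lra. }
      apply V_le; lra. }
  pose proof (V_boundary_layer_ge beta ltac:(lra) hchi hq).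
  replace (256 / beta ^ 4) with (64 * A / beta) by (unfold A; field; lra).
  apply (Rmult_le_reg_l (beta / 8)); [lra|].
  replace (beta / 8 * (64 * A / beta * Q 0 * sqrt chi)) with (8 * A * sqrt chi * Q 0)
    by (field; lra).
  lra.
Qed.

Lemma derivative_bounds_nonneg beta K x : 0 < beta <= 1 -> 1 <= chi -> beta * chi <= q 1 ->
  Q 0 <= K -> 0 <= x <= 1 ->
  Rabs (f1 x) <= 16 * sqrt K / beta ^ 2 * Rpower chi (5 / 4) /\
  (1 - x ^ 2) * Rabs (f1 x) <= 16 * sqrt K / beta ^ 2 * sqrt chi.
Proof.
  intros hb hchi hq hK hx. pose proof Q0_nonneg.
  assert (hb2 : 0 < beta ^ 2) by (apply pow_lt; lra).
  assert (hC : sqrt K <= 16 * sqrt K / beta ^ 2)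
    by (apply Rle_trans with (16 * sqrt K); [pose proof (sqrt_pos K); lra|];
        apply le_div_pow; [pose proof (sqrt_pos K); lra|lra]).
  pose proof (sqrt_pos chi). pose proof (sqrt_pos (sqrt chi)).
  split.
  - set (C := 16 * sqrt K / beta ^ 2) in *.
    assert (hC0 : 0 <= C) by (pose proof (sqrt_pos K); lra).
    assert (hf1 : Rabs (f 1) <= C * sqrt (sqrt chi)).
    { assert (hsq : f 1 ^ 2 <= C ^ 2 * sqrt chi).
      { replace (C ^ 2) with (256 / beta ^ 4 * K)
          by (unfold C; rewrite <- (pow2_sqrt K) at 1 by lra; field; lra).
        apply Rle_trans with (1 := f_one_sq_le beta hb hchi hq).
        apply Rmult_le_compat_r; [lra|]. apply Rmult_le_compat_l; [|exact hK].
        apply Rdiv_le_0_compat; [lra|apply pow_lt; lra]. }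
      rewrite <- (sqrt_pow2 (Rabs (f 1)) (Rabs_pos _)), pow2_abs, <- (sqrt_pow2 C hC0),
        <- sqrt_mult by (try apply pow2_ge_0; lra).
      now apply sqrt_le_1_alt. }
    rewrite Rpower_5_4 by lra.
    apply Rle_trans with (1 := Rabs_f1_le_chi x hx).
    replace (C * (chi * sqrt (sqrt chi))) with (chi * (C * sqrt (sqrt chi))) by ring.
    apply Rmult_le_compat_l; lra.
  - apply Rle_trans with (sqrt (chi * K)).
    + apply Rle_trans with (sqrt (chi * Q 0)); [now apply weighted_f1_le|].
      apply sqrt_le_1_alt, Rmult_le_compat_l; lra.
    + rewrite sqrt_mult, Rmult_comm by lra. apply Rmult_le_compat_r; lra.
Qed.

End Prolate.

Lemma Q_reflect c chi f f1 :
  Q c chi (fun y => f (- y)) (fun y => - f1 (- y)) 0 = Q c chi f f1 0.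
Proof. unfold Q, Rdiv. rewrite Ropp_0. ring. Qed.

(* [(1 + / beta) / 2] is the bound on [Q 0] given by [Q0_le_of_norm]. *)
Definition pswf_constant beta := 16 * sqrt ((1 + / beta) / 2) / beta ^ 2.

Lemma pswf_constant_nonneg beta : 0 < beta -> 0 <= pswf_constant beta.
Proof.
  intro hb. apply Rdiv_le_0_compat; [pose proof (sqrt_pos ((1 + / beta) / 2)); lra|].
  now apply pow_lt.
Qed.

Lemma derivative_bounds c chi beta f f1 f2 x : prolate_ode c chi f f1 f2 ->
  0 < beta <= 1 -> 1 <= chi -> beta * chi <= q c chi 1 ->
  RInt (fun x => f x ^ 2) (-1) 1 = 1 -> -1 <= x <= 1 ->
  Rabs (f1 x) <= pswf_constant beta * Rpower chi (5 / 4) /\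
  (1 - x ^ 2) * Rabs (f1 x) <= pswf_constant beta * sqrt chi.
Proof.
  intros hsol hb hchi hq hnorm hx.
  assert (hq1 : 0 < q c chi 1) by nra.
  pose proof (Q0_le_of_norm c chi f f1 f2 hsol hq1 beta hnorm ltac:(lra) hq) as hK.
  destruct (Rle_lt_dec 0 x) as [hx0|hx0].
  - exact (derivative_bounds_nonneg c chi f f1 f2 hsol hq1 beta _ x hb hchi hq hK ltac:(lra)).
  - rewrite <- Q_reflect in hK.
    destruct (derivative_bounds_nonneg c chi _ _ _ (prolate_ode_reflect c chi f f1 f2 hsol)
      hq1 beta _ (- x) hb hchi hq hK ltac:(lra)) as [h1 h2].
    rewrite Ropp_involutive, Rabs_Ropp in *.
    replace ((- x) ^ 2) with (x ^ 2) in h2 by ring. now split.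
Qed.

Theorem proposition3 (alpha : R) (halpha : 0 < alpha < 1) :
  exists C : R,
    forall (c : R) (n : nat) (chi : R) (psi dpsi : R -> R),
      0 <= c ->
      is_pswf c n chi psi ->
      (forall x, derivable_pt_lim psi x (dpsi x)) ->
      c ^ 2 / chi < alpha ->
      (forall x, -1 <= x <= 1 -> Rabs (dpsi x) <= C * Rpower chi (5 / 4)) /\
      (forall x, -1 <= x <= 1 -> (1 - x ^ 2) * Rabs (dpsi x) <= C * sqrt chi).
Proof.
  exists (pswf_constant (1 - alpha)).
  intros c n chi psi dpsi _ [_ [[d1 [d2 [h1 [h2 h3]]]] [[pr hnorm] [hpar hpos]]]] hd hratio.
  assert (hsol : prolate_ode c chi psi d1 d2)
    by (split; [|split]; [intro; apply is_derive_Reals, h1|intro; apply is_derive_Reals, h2|];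
        auto).
  assert (hdpsi : forall x, dpsi x = d1 x)
    by (intro x; exact (uniqueness_limite _ _ _ _ (hd x) (h1 x))).
  rewrite <- RInt_Reals in hnorm.
  pose proof (pswf_constant_nonneg (1 - alpha) ltac:(lra)) as hC.
  destruct (Rle_lt_dec chi 0) as [hchi|hchi].
  - pose proof (f1_vanishes c chi psi d1 d2 hsol hnorm hchi) as hz.
    assert (0 < Rpower chi (5 / 4)) by apply exp_pos. pose proof (sqrt_pos chi).
    split; intros x hx; rewrite hdpsi, hz, Rabs_R0 by exact hx; nra.
  - assert (hq : (1 - alpha) * chi <= q c chi 1).
    { assert (c ^ 2 < alpha * chi) by (apply (Rmult_lt_compat_r chi) in hratio; [|lra];
        unfold Rdiv in hratio; rewrite Rmult_assoc, Rinv_l, Rmult_1_r in hratio; lra).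
      unfold q. lra. }
    assert (hq1 : 0 < q c chi 1) by nra.
    pose proof (chi_ge_one c chi psi d1 d2 hsol hq1 n hnorm hpar hpos).
    split; intros x hx; rewrite hdpsi; apply (derivative_bounds c chi (1 - alpha) psi d1 d2 x);
      auto; lra.
Qed.
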